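(* Let $E=(E^0,E^1,r,s)$ be a graph. If $E$ has no cycles and $E$ has a countable (finite or countably infinite) number of shift-tail equivalence classes of boundary paths, then $E$ contains a line point.
   Context: A graph $E=(E^0,E^1,r,s)$ has vertex set $E^0$, edge set $E^1$, range and source maps. A cycle is a path $e_1\cdots e_n$ ($n\ge1$, $r(e_i)=s(e_{i+1})$) with $s(e_1)=r(e_n)$. A vertex is singular if it emits no edges or infinitely many edges. Boundary paths: infinite paths $e_1e_2\cdots$ together with finite paths (including vertices as length-$0$ paths) whose range is singular. The shift $\sigma_E$ removes the first edge (fixes vertices; sends a single edge $e$ to $r(e)$); boundary paths $\alpha,\beta$ are shift-tail equivalent if $\sigma_E^m(\alpha)=\sigma_E^n(\beta)$ for some $m,n\in\mathbb{N}$. For $v\in E^0$, $T(v)$ is the set of vertices reachable from $v$ by a path (including $v$). A bifurcation vertex emits at least two edges. $v$ is a line point if $T(v)$ contains no bifurcation vertex and no vertex of $T(v)$ lies on a cycle. *)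

From Stdlib Require Import List.
Import ListNotations.
Set Implicit Arguments.

Section Graph.
Variables (V Ed : Type) (r s : Ed -> V).

Fixpoint is_path_from (v : V) (l : list Ed) : Prop :=
  match l with
  | [] => True
  | e :: l' => s e = v /\ is_path_from (r e) l'
  end.

Fixpoint path_range (v : V) (l : list Ed) : V :=
  match l with
  | [] => v
  | e :: l' => path_range (r e) l'
  end.

Definition is_cycle (c : list Ed) : Prop :=
  match c with
  | [] => False
  | e :: _ => is_path_from (s e) c /\ path_range (s e) c = s e
  end.

Definition no_cycles : Prop := forall c, ~ is_cycle c.

Definition on_cycle (w : V) : Prop :=
  exists c, is_cycle c /\ exists e, In e c /\ s e = w.

Definition emits_finitely (v : V) : Prop :=
  exists l : list Ed, forall e, s e = v -> In e l.
Definition singular (v : V) : Prop :=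
  (forall e, s e <> v) \/ ~ emits_finitely v.

Definition bifurcation (v : V) : Prop :=
  exists e1 e2, e1 <> e2 /\ s e1 = v /\ s e2 = v.

Definition reachable (v w : V) : Prop :=
  exists l, is_path_from v l /\ path_range v l = w.

Definition line_point (v : V) : Prop :=
  forall w, reachable v w -> ~ bifurcation w /\ ~ on_cycle w.

Inductive gpath : Type :=
  | PFin : V -> list Ed -> gpath
  | PInf : (nat -> Ed) -> gpath.

Definition is_boundary (a : gpath) : Prop :=
  match a with
  | PFin v l => is_path_from v l /\ singular (path_range v l)
  | PInf p => forall n, r (p n) = s (p (S n))
  end.

Definition shift (a : gpath) : gpath :=
  match a with
  | PFin v [] => PFin v []
  | PFin _ (e :: l) => PFin (r e) l
  | PInf p => PInf (fun n => p (S n))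
  end.

Definition path_eq (a b : gpath) : Prop :=
  match a, b with
  | PFin v l, PFin w k => v = w /\ l = k
  | PInf p, PInf q => forall n, p n = q n
  | _, _ => False
  end.

Definition shift_tail_equiv (a b : gpath) : Prop :=
  exists m n : nat, path_eq (Nat.iter m shift a) (Nat.iter n shift b).

(* The set of shift-tail equivalence classes of boundary paths is countable
   (finite or countably infinite): there is a (partial) enumeration
   nat -> option boundary path meeting every class. *)
Definition countably_many_tail_classes : Prop :=
  exists g : nat -> option gpath,
    (forall n b, g n = Some b -> is_boundary b) /\
    (forall a, is_boundary a ->
       exists n b, g n = Some b /\ shift_tail_equiv a b).

End Graph.

(* Suppose there is no line point.  Since there are no cycles, every vertex
   then reaches a bifurcation vertex.  Walk through the graph along the only
   available edge at ordinary vertices; at the c-th bifurcation vertex met,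
   pick one of two distinct outgoing edges so as to avoid the infinite path
   of index n(c) in an enumeration of the tail classes, where n(c) takes
   every value infinitely often.  The resulting infinite boundary path is
   tail equivalent to no enumerated path (finite ones are excluded outright):
   at a late enough bifurcation step the two paths would have to share the
   chosen edge, and since an acyclic infinite path visits each vertex at most
   once, that edge was avoided. *)
From Stdlib Require Import List Arith Lia Classical ClassicalEpsilon.
Set Implicit Arguments.

Definition diag_index (c : nat) : nat := c - Nat.sqrt c * Nat.sqrt c.

Lemma diag_index_recurs (n m : nat) : exists c, m <= c /\ diag_index c = n.
Proof.
  exists ((n + m) * (n + m) + n); unfold diag_index.
  assert (Nat.sqrt ((n + m) * (n + m) + n) = n + m) as ->.
  { apply Nat.sqrt_unique; split; nia. }
  split; nia.
Qed.

Section Graph.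
Variables (V Ed : Type) (r s : Ed -> V).

Lemma not_bifurcation_edge_unique (x : V) (e1 e2 : Ed) :
  ~ bifurcation s x -> s e1 = x -> s e2 = x -> e1 = e2.
Proof.
  intros Hx H1 H2; apply NNPP; intro Hne; apply Hx; now exists e1, e2.
Qed.

Lemma reaches_bifurcation_of_not_line_point (v : V) :
  no_cycles r s -> ~ line_point r s v -> exists w, reachable r s v w /\ bifurcation s w.
Proof.
  intros Hnc Hv; apply NNPP; intro Hno; apply Hv; intros w Hw; split.
  - intro Hb; apply Hno; now exists w.
  - intros [c [Hc _]]; exact (Hnc c Hc).
Qed.

Lemma emits_of_reaches_bifurcation (v w : V) :
  reachable r s v w -> bifurcation s w -> exists e, s e = v.
Proof.
  intros [[|e l] [Hl <-]] [e1 [e2 [_ [He1 _]]]].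
  - now exists e1.
  - exists e; apply Hl.
Qed.

Lemma branch_choice :
  (forall x, exists w, reachable r s x w /\ bifurcation s w) ->
  exists choice : V -> Ed * Ed, forall x,
    s (fst (choice x)) = x /\ s (snd (choice x)) = x /\
    (bifurcation s x -> fst (choice x) <> snd (choice x)).
Proof.
  intro Hreach; apply (choice (fun x (ee : Ed * Ed) =>
    s (fst ee) = x /\ s (snd ee) = x /\ (bifurcation s x -> fst ee <> snd ee))).
  intro x; destruct (classic (bifurcation s x)) as [Hb | Hb].
  - destruct Hb as [e1 [e2 [Hne [H1 H2]]]]; now exists (e1, e2).
  - destruct (Hreach x) as [w [Hxw Hw]].
    destruct (emits_of_reaches_bifurcation Hxw Hw) as [e He].
    exists (e, e); simpl; tauto.
Qed.

Lemma infinite_path_segment (q : nat -> Ed) :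
  is_boundary r s (PInf V q) -> forall k i,
  is_path_from r s (s (q i)) (map q (seq i k)) /\
  path_range r (s (q i)) (map q (seq i k)) = s (q (i + k)).
Proof.
  intros Hq k; induction k as [|k IH]; intro i; simpl.
  - now rewrite Nat.add_0_r.
  - rewrite Hq; destruct (IH (S i)) as [Hpath Hrange]; split; [easy|].
    now rewrite Hrange, Nat.add_succ_r.
Qed.

Lemma infinite_path_source_inj (q : nat -> Ed) (i j : nat) :
  no_cycles r s -> is_boundary r s (PInf V q) -> s (q i) = s (q j) -> i = j.
Proof.
  intros Hnc Hq.
  assert (Hlt : forall i j, i < j -> s (q i) <> s (q j)).
  { intros i' j' Hij Hs; apply (Hnc (map q (seq i' (S (j' - i' - 1))))).
    destruct (infinite_path_segment Hq (S (j' - i' - 1)) i') as [Hpath Hrange].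
    split; [exact Hpath|].
    rewrite Hrange, Hs; do 2 f_equal; lia. }
  intro Hs; destruct (Nat.lt_trichotomy i j) as [H | [H | H]]; [|easy|].
  - now destruct (Hlt _ _ H).
  - now destruct (Hlt _ _ H).
Qed.

Lemma iter_shift_PInf (m : nat) : forall p : nat -> Ed,
  Nat.iter m (shift r) (PInf V p) = PInf V (fun i => p (m + i)).
Proof.
  induction m as [|m IH]; intro p; [easy|].
  rewrite Nat.iter_succ_r; apply IH.
Qed.

Lemma iter_shift_PFin (m : nat) (v : V) (l : list Ed) :
  exists w l', Nat.iter m (shift r) (PFin v l) = PFin w l'.
Proof.
  induction m as [|m [w [l' IH]]]; simpl; [eauto|].
  rewrite IH; destruct l'; simpl; eauto.
Qed.

Lemma tail_equiv_PInf (p : nat -> Ed) (b : gpath V Ed) :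
  shift_tail_equiv r (PInf V p) b ->
  exists q m k, b = PInf V q /\ forall i, p (m + i) = q (k + i).
Proof.
  intros [m [k Heq]]; rewrite iter_shift_PInf in Heq.
  destruct b as [v l | q].
  - destruct (iter_shift_PFin k v l) as [w [l' E]]; now rewrite E in Heq.
  - rewrite iter_shift_PInf in Heq; now exists q, m, k.
Qed.

Section Walk.
Variables (step : nat -> V -> Ed) (x0 : V).
Hypothesis step_source : forall c x, s (step c x) = x.

(* The state is the current vertex and the number of bifurcation vertices
   already left; [step c x] is the edge taken from [x] in that state. *)
Definition walk_step (xc : V * nat) : V * nat :=
  (r (step (snd xc) (fst xc)),
   if excluded_middle_informative (bifurcation s (fst xc)) then S (snd xc) else snd xc).

Definition walk (k : nat) : V * nat := Nat.iter k walk_step (x0, 0).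

Definition walk_edge (k : nat) : Ed := step (snd (walk k)) (fst (walk k)).

Lemma walk_S (k : nat) : walk (S k) = walk_step (walk k).
Proof. reflexivity. Qed.

Lemma walk_is_boundary : is_boundary r s (PInf V walk_edge).
Proof. intro k; unfold walk_edge; now rewrite step_source. Qed.

Lemma walk_count_le (k : nat) : snd (walk k) <= k.
Proof.
  induction k as [|k IH]; [easy|].
  rewrite walk_S; unfold walk_step; simpl.
  destruct excluded_middle_informative; lia.
Qed.

Lemma walk_follows_path (l : list Ed) : forall k,
  is_path_from r s (fst (walk k)) l -> bifurcation s (path_range r (fst (walk k)) l) ->
  exists k', snd (walk k') = snd (walk k) /\ bifurcation s (fst (walk k')).
Proof.
  induction l as [|e l IH]; intros k Hl Hend.
  - now exists k.
  - destruct (classic (bifurcation s (fst (walk k)))) as [Hb | Hb].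
    + now exists k.
    + destruct Hl as [He Hl].
      assert (Hstep : e = walk_edge k)
        by exact (not_bifurcation_edge_unique Hb He (step_source _ _)).
      assert (Hnext : walk (S k) = (r e, snd (walk k))).
      { rewrite walk_S; unfold walk_step.
        destruct excluded_middle_informative; [easy|].
        now rewrite Hstep. }
      assert (Hx : fst (walk (S k)) = r e) by now rewrite Hnext.
      cbn in Hend; rewrite <- Hx in Hl, Hend.
      destruct (IH (S k) Hl Hend) as [k' [Hc Hb']].
      exists k'; now rewrite Hc, Hnext.
Qed.

Lemma walk_count_at_bifurcation :
  (forall x, exists w, reachable r s x w /\ bifurcation s w) ->
  forall c, exists k, snd (walk k) = c /\ bifurcation s (fst (walk k)).
Proof.
  intros Hreach c.
  assert (Hfrom : forall k, exists k', snd (walk k') = snd (walk k) /\ bifurcation s (fst (walk k'))).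
  { intro k; destruct (Hreach (fst (walk k))) as [w [[l [Hl <-]] Hw]].
    exact (walk_follows_path l k Hl Hw). }
  induction c as [|c [k [Hk Hb]]].
  - exact (Hfrom 0).
  - destruct (Hfrom (S k)) as [k' [Hk' Hb']]; exists k'; split; [|easy].
    rewrite Hk', walk_S; unfold walk_step; simpl.
    destruct excluded_middle_informative; [now rewrite Hk | easy].
Qed.

End Walk.

Section Diagonal.
Variables (g : nat -> option (gpath V Ed)) (choice : V -> Ed * Ed) (x0 : V).
Hypothesis no_cyc : no_cycles r s.
Hypothesis g_boundary : forall n b, g n = Some b -> is_boundary r s b.
Hypothesis reach : forall x, exists w, reachable r s x w /\ bifurcation s w.
Hypothesis choice_spec : forall x,
  s (fst (choice x)) = x /\ s (snd (choice x)) = x /\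
  (bifurcation s x -> fst (choice x) <> snd (choice x)).

Definition on_enumerated_path (n : nat) (e : Ed) : Prop :=
  exists q, g n = Some (PInf V q) /\ exists j, q j = e.

Definition diagonal_step (c : nat) (x : V) : Ed :=
  if excluded_middle_informative (on_enumerated_path (diag_index c) (fst (choice x)))
  then snd (choice x) else fst (choice x).

Lemma diagonal_step_source (c : nat) (x : V) : s (diagonal_step c x) = x.
Proof. unfold diagonal_step; destruct excluded_middle_informative; apply choice_spec. Qed.

(* If the first edge lies on the enumerated path, the second one cannot:
   both leave [x], which that acyclic path visits at most once. *)
Lemma diagonal_step_avoids (c : nat) (x : V) (q : nat -> Ed) :
  bifurcation s x -> g (diag_index c) = Some (PInf V q) ->
  forall j, q j <> diagonal_step c x.
Proof.
  intros Hb Hg j Hj; destruct (choice_spec x) as [H1 [H2 Hne]].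
  revert Hj; unfold diagonal_step; destruct excluded_middle_informative as [Hon | Hoff].
  - destruct Hon as [q' [Hg' [i Hi]]]; rewrite Hg in Hg'; injection Hg' as <-.
    intro Hj; apply (Hne Hb).
    assert (i = j) as <- by
      (apply (infinite_path_source_inj i j no_cyc (g_boundary Hg)); congruence).
    congruence.
  - intro Hj; apply Hoff; exists q; eauto.
Qed.

Lemma diagonal_walk_escapes (n : nat) (b : gpath V Ed) :
  g n = Some b -> ~ shift_tail_equiv r (PInf V (walk_edge diagonal_step x0)) b.
Proof.
  intros Hgn Heq; destruct (tail_equiv_PInf Heq) as [q [m [k [-> Hpq]]]].
  destruct (diag_index_recurs n m) as [c [Hmc Hc]].
  destruct (walk_count_at_bifurcation diagonal_step x0 diagonal_step_source reach c) as [K [HK Hb]].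
  pose proof (walk_count_le diagonal_step x0 K) as HcK.
  apply (@diagonal_step_avoids c _ q Hb) with (j := k + (K - m)); [now rewrite Hc|].
  rewrite <- Hpq, <- HK; unfold walk_edge; now replace (m + (K - m)) with K by lia.
Qed.

End Diagonal.

End Graph.

Theorem lemma4p7 (V Ed : Type) (r s : Ed -> V) (HV : inhabited V) :
  no_cycles r s ->
  countably_many_tail_classes r s ->
  exists v : V, line_point r s v.
Proof.
  intros Hnc [g [Hg Henum]]; destruct HV as [x0].
  apply NNPP; intro Hno.
  assert (Hreach : forall x, exists w, reachable r s x w /\ bifurcation s w).
  { intro x; apply reaches_bifurcation_of_not_line_point; [easy|].
    intro Hx; apply Hno; now exists x. }
  destruct (branch_choice Hreach) as [choice Hchoice].
  pose proof (walk_is_boundary r s (diagonal_step g choice) x0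
                (diagonal_step_source g choice Hchoice)) as Hb.
  destruct (Henum _ Hb) as [n [b [Hgn Hequiv]]].
  exact (diagonal_walk_escapes Hnc Hg Hreach Hchoice n Hgn Hequiv).
Qed.
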